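(* Let $\mathcal L$ be one of $\lambda^{S},\lambda^{SR},\lambda^{SJ},\lambda^{ML}$ and let $\Gamma\vdash t:A$, $\Gamma\vdash u:A$ be terms of $\mathcal L$. If $[\![t]\!]=[\![u]\!]$ in every proof-relevant possible-world model whose frame is a proof-relevant $\mathcal L$-frame, then $\Gamma\vdash t\equiv u:A$ in $\mathcal L$.
   Context: Calculi. Types: $A,B ::= \iota \mid 1 \mid A\times B \mid A\to B \mid \Diamond A$ ($\iota$ a base type); contexts are lists of distinct typed variables. Simply typed terms: variables, $()$, $\langle t,u\rangle$, $\mathsf{fst}\,t$, $\mathsf{snd}\,t$, $\lambda x.t$, $t\,u$ with standard typing. Modal formers: (letmap) $\Gamma\vdash t:\Diamond A$, $\Gamma,x:A\vdash u:B$ give $\Gamma\vdash\mathsf{letmap}\ x=t\ \mathsf{in}\ u:\Diamond B$; (ret) $\Gamma\vdash t:A$ gives $\Gamma\vdash\mathsf{ret}\,t:\Diamond A$; (let) $\Gamma\vdash t:\Diamond A$, $\Gamma,x:A\vdash u:\Diamond B$ give $\Gamma\vdash\mathsf{let}\ x=t\ \mathsf{in}\ u:\Diamond B$. $\lambda^{S}$ has letmap; $\lambda^{SR}$ letmap and ret; $\lambda^{SJ}$ letmap and let; $\lambda^{ML}$ ret and let. The equational theory $\equiv$ of each calculus is the least congruence containing the simply typed $\beta\eta$-laws ($t\equiv()$ at $1$; $t\equiv\langle\mathsf{fst}\,t,\mathsf{snd}\,t\rangle$; $\mathsf{fst}\langle t,u\rangle\equiv t$; $\mathsf{snd}\langle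 t,u\rangle\equiv u$; $t\equiv\lambda x.\,t\,x$; $(\lambda x.t)u\equiv t[u/x]$) and the modal laws (terms weakened where needed): $t\equiv\mathsf{letmap}\ x=t\ \mathsf{in}\ x$ and $\mathsf{letmap}\ y=(\mathsf{letmap}\ x=t\ \mathsf{in}\ u)\ \mathsf{in}\ u'\equiv\mathsf{letmap}\ x=t\ \mathsf{in}\ u'[u/y]$ [$\lambda^{S},\lambda^{SR},\lambda^{SJ}$]; $\mathsf{letmap}\ x=\mathsf{ret}\,t\ \mathsf{in}\ u\equiv\mathsf{ret}(u[t/x])$ [$\lambda^{SR}$]; $\mathsf{let}\ y=(\mathsf{letmap}\ x=t\ \mathsf{in}\ u)\ \mathsf{in}\ u'\equiv\mathsf{let}\ x=t\ \mathsf{in}\ u'[u/y]$ and $\mathsf{letmap}\ y=(\mathsf{let}\ x=t\ \mathsf{in}\ u)\ \mathsf{in}\ u'\equiv\mathsf{let}\ x=t\ \mathsf{in}\ (\mathsf{letmap}\ y=u\ \mathsf{in}\ u')$ [$\lambda^{SJ}$]; $\mathsf{let}\ y=(\mathsf{let}\ x=t\ \mathsf{in}\ u)\ \mathsf{in}\ u'\equiv\mathsf{let}\ x=t\ \mathsf{in}\ (\mathsf{let}\ y=u\ \mathsf{in}\ u')$ [$\lambda^{SJ},\lambda^{ML}$]; $\mathsf{let}\ x=\mathsf{ret}\,t\ \mathsf{in}\ u\equiv u[t/x]$ and $t\equiv\mathsf{let}\ x=t\ \mathsf{in}\ \mathsf{ret}\,x$ [$\lambda^{ML}$]. Frames (constructive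 meta-theory). A proof-relevant $\lambda^{S}$-frame $(W,\le_i,R_m)$: a type $W$, relations $\le_i,R_m:W\to W\to\mathrm{Type}$, $\mathrm{refl}_i$, $\mathrm{trans}_i$ making $\le_i$ a category; $\mathrm{factor}:w\le_i w'\to w\,R_m\,v\to\Sigma_{v'}.\,(w'\,R_m\,v')\times(v\le_i v')$ with $\mathrm{factor}(\mathrm{refl}_i,m)=\langle m,\mathrm{refl}_i\rangle$ and $\mathrm{factor}(\mathrm{trans}_i(i_1,i_2),m)=\langle m_2',\mathrm{trans}_i(i_1',i_2')\rangle$ where $\langle m_1',i_1'\rangle=\mathrm{factor}(i_1,m)$, $\langle m_2',i_2'\rangle=\mathrm{factor}(i_2,m_1')$; $\mathrm{incl}:w\,R_m\,v\to w\le_i v$ with $\mathrm{trans}_i(i,\mathrm{incl}(m'))=\mathrm{trans}_i(\mathrm{incl}(m),i')$ when $\langle m',i'\rangle=\mathrm{factor}(i,m)$. A $\lambda^{SR}$-frame adds $\mathrm{refl}_m:w\,R_m\,w$ with $\mathrm{factor}(i,\mathrm{refl}_m)=\langle\mathrm{refl}_m,i\rangle$, $\mathrm{incl}(\mathrm{refl}_m)=\mathrm{refl}_i$. A $\lambda^{SJ}$-frame adds an associative $\mathrm{trans}_m:u\,R_m\,v\to v\,R_m\,w\to u\,R_m\,w$ with $\mathrm{factor}(i,\mathrm{trans}_m(m_1,m_2))=\langle\mathrm{trans}_m(m_1',m_2'),i_2'\rangle$ where $\langle m_1',i_1'\rangle=\mathrm{factor}(i,m_1)$, $\langle m_2',i_2'\rangle=\mathrm{factor}(i_1',m_2)$,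 and $\mathrm{incl}(\mathrm{trans}_m(m_1,m_2))=\mathrm{trans}_i(\mathrm{incl}\,m_1,\mathrm{incl}\,m_2)$. A $\lambda^{ML}$-frame is both, with $\mathrm{trans}_m(\mathrm{refl}_m,m)=m=\mathrm{trans}_m(m,\mathrm{refl}_m)$. A presheaf is a family $P_w$ with functorial transports $P(i):P_w\to P_{w'}$. Models and interpretation. A model is a frame with a presheaf $V$ (valuation of $\iota$). $[\![\iota]\!]_w=V_w$, $[\![1]\!]_w=\top$, $[\![A\times B]\!]_w=[\![A]\!]_w\times[\![B]\!]_w$, $[\![A\to B]\!]_w=\forall w'.\,w\le_i w'\to[\![A]\!]_{w'}\to[\![B]\!]_{w'}$, $[\![\Diamond A]\!]_w=\Sigma_v.\,(w\,R_m\,v)\times[\![A]\!]_v$ (transport for $\Diamond$ via $\mathrm{factor}$); $[\![\Gamma]\!]_w$ the iterated product. Terms: variables by projection; unit/pairs pointwise; $[\![\lambda x.t]\!]\gamma=\lambda i.\lambda a.[\![t]\!]([\![\Gamma]\!](i)(\gamma),a)$; $[\![t\,u]\!]\gamma=[\![t]\!]\gamma\ \mathrm{refl}_i\ ([\![u]\!]\gamma)$; $[\![\mathsf{letmap}\ x=t\ \mathsf{in}\ u]\!]\gamma=\langle v,m,[\![u]\!]([\![\Gamma]\!](\mathrm{incl}\,m)(\gamma),a)\rangle$ where $\langle v,m,a\rangle=[\![t]\!]\gamma$; $[\![\mathsf{ret}\,t]\!]_w\gamma=\langle w,\mathrm{refl}_m,[\![t]\!]\gamma\rangle$; $[\![\mathsf{let}\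 x=t\ \mathsf{in}\ u]\!]\gamma=\langle v',\mathrm{trans}_m(m,m'),b\rangle$ where $\langle v,m,a\rangle=[\![t]\!]\gamma$, $\langle v',m',b\rangle=[\![u]\!]([\![\Gamma]\!](\mathrm{incl}\,m)(\gamma),a)$. $[\![t]\!]=[\![u]\!]$ means equality at every world and every environment. *)

From Stdlib Require Import List Bool.
Import ListNotations.

Inductive Calc : Type := cS | cSR | cSJ | cML.

Definition hasLetmap (L : Calc) : bool :=
  match L with cS | cSR | cSJ => true | cML => false end.
Definition hasRet (L : Calc) : bool :=
  match L with cSR | cML => true | _ => false end.
Definition hasLet (L : Calc) : bool :=
  match L with cSJ | cML => true | _ => false end.

Inductive Ty : Type :=
| Base : Ty
| Unit : Ty
| Prod : Ty -> Ty -> Ty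
| Arr  : Ty -> Ty -> Ty
| Dia  : Ty -> Ty.

(** Contexts: lists of types, variables are de Bruijn indices
    (the head of the list is the most recently bound variable). *)
Definition Ctx := list Ty.

Inductive Var : Ctx -> Ty -> Type :=
| vz : forall G A, Var (A :: G) A
| vs : forall G A B, Var G A -> Var (B :: G) A.
Arguments vz {G A}.
Arguments vs {G A B} _.

Inductive Tm (L : Calc) : Ctx -> Ty -> Type :=
| var    : forall G A, Var G A -> Tm L G A
| tunit  : forall G, Tm L G Unit
| pair   : forall G A B, Tm L G A -> Tm L G B -> Tm L G (Prod A B)
| fst_   : forall G A B, Tm L G (Prod A B) -> Tm L G A
| snd_   : forall G A B, Tm L G (Prod A B) -> Tm L G B
| lam    : forall G A B, Tm L (A :: G) B -> Tm L G (Arr A B)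
| app    : forall G A B, Tm L G (Arr A B) -> Tm L G A -> Tm L G B
| letmap : forall G A B, hasLetmap L = true ->
             Tm L G (Dia A) -> Tm L (A :: G) B -> Tm L G (Dia B)
| ret    : forall G A, hasRet L = true -> Tm L G A -> Tm L G (Dia A)
| letin  : forall G A B, hasLet L = true ->
             Tm L G (Dia A) -> Tm L (A :: G) (Dia B) -> Tm L G (Dia B).
Arguments var {L G A} _.
Arguments tunit {L G}.
Arguments pair {L G A B} _ _.
Arguments fst_ {L G A B} _.
Arguments snd_ {L G A B} _.
Arguments lam {L G A B} _.
Arguments app {L G A B} _ _.
Arguments letmap {L G A B} _ _ _.
Arguments ret {L G A} _ _.
Arguments letin {L G A B} _ _ _.

Definition Ren (G D : Ctx) := forall A, Var G A -> Var D A.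
Definition Sub (L : Calc) (G D : Ctx) := forall A, Var G A -> Tm L D A.

Definition rcons {G D B} (x : Var D B) (r : Ren G D) : Ren (B :: G) D :=
  fun A v =>
    match v in Var G' A'
      return (match G' with
              | [] => unit
              | B' :: G'' => Var D B' -> Ren G'' D -> Var D A'
              end : Type)
    with
    | vz => fun x _ => x
    | vs v' => fun _ r => r _ v'
    end x r.

Definition wkR {G B} : Ren G (B :: G) := fun _ v => vs v.

Definition liftR {G D B} (r : Ren G D) : Ren (B :: G) (B :: D) :=
  rcons vz (fun A v => vs (r A v)).

Fixpoint ren {L G D A} (r : Ren G D) (t : Tm L G A) : Tm L D A :=
  match t in Tm _ G' A' return Ren G' D -> Tm L D A' with
  | var x => fun r => var (r _ x)
  | tunit => fun _ => tunit
  | pair t u => fun r => pair (ren r t) (ren r u)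
  | fst_ t => fun r => fst_ (ren r t)
  | snd_ t => fun r => snd_ (ren r t)
  | lam t => fun r => lam (ren (liftR r) t)
  | app t u => fun r => app (ren r t) (ren r u)
  | letmap p t u => fun r => letmap p (ren r t) (ren (liftR r) u)
  | ret p t => fun r => ret p (ren r t)
  | letin p t u => fun r => letin p (ren r t) (ren (liftR r) u)
  end r.

Definition wk {L G A B} (t : Tm L G A) : Tm L (B :: G) A := ren wkR t.

Definition scons {L G D B} (t : Tm L D B) (s : Sub L G D) : Sub L (B :: G) D :=
  fun A v =>
    match v in Var G' A'
      return (match G' with
              | [] => unit
              | B' :: G'' => Tm L D B' -> Sub L G'' D -> Tm L D A'
              end : Type)
    with
    | vz => fun t _ => t
    | vs v' => fun _ s => s _ v'
    end t s.

Definition idS {L G} : Sub L G G := fun _ v => var v.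

Definition liftS {L G D B} (s : Sub L G D) : Sub L (B :: G) (B :: D) :=
  scons (var vz) (fun A v => wk (s A v)).

Fixpoint sub {L G D A} (s : Sub L G D) (t : Tm L G A) : Tm L D A :=
  match t in Tm _ G' A' return Sub L G' D -> Tm L D A' with
  | var x => fun s => s _ x
  | tunit => fun _ => tunit
  | pair t u => fun s => pair (sub s t) (sub s u)
  | fst_ t => fun s => fst_ (sub s t)
  | snd_ t => fun s => snd_ (sub s t)
  | lam t => fun s => lam (sub (liftS s) t)
  | app t u => fun s => app (sub s t) (sub s u)
  | letmap p t u => fun s => letmap p (sub s t) (sub (liftS s) u)
  | ret p t => fun s => ret p (sub s t)
  | letin p t u => fun s => letin p (sub s t) (sub (liftS s) u)
  end s.

Definition subst1 {L G A B} (u : Tm L G A) (t : Tm L (A :: G) B) : Tm L G B :=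
  sub (scons u idS) t.

Definition substw {L G A B C} (u : Tm L (A :: G) B) (t : Tm L (B :: G) C)
  : Tm L (A :: G) C :=
  sub (scons u (fun _ v => var (vs v))) t.

Definition wk1 {L G A B C} (t : Tm L (B :: G) C) : Tm L (B :: A :: G) C :=
  ren (liftR wkR) t.

(** * Equational theory: least congruence containing the laws *)

Inductive Conv {L : Calc} : forall {G A}, Tm L G A -> Tm L G A -> Prop :=
| cv_refl  : forall G A (t : Tm L G A), Conv t t
| cv_sym   : forall G A (t u : Tm L G A), Conv t u -> Conv u t
| cv_trans : forall G A (t u v : Tm L G A), Conv t u -> Conv u v -> Conv t v
| cg_pair : forall G A B (t t' : Tm L G A) (u u' : Tm L G B),
    Conv t t' -> Conv u u' -> Conv (pair t u) (pair t' u')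
| cg_fst : forall G A B (t t' : Tm L G (Prod A B)), Conv t t' -> Conv (fst_ t) (fst_ t')
| cg_snd : forall G A B (t t' : Tm L G (Prod A B)), Conv t t' -> Conv (snd_ t) (snd_ t')
| cg_lam : forall G A B (t t' : Tm L (A :: G) B), Conv t t' -> Conv (lam t) (lam t')
| cg_app : forall G A B (t t' : Tm L G (Arr A B)) (u u' : Tm L G A),
    Conv t t' -> Conv u u' -> Conv (app t u) (app t' u')
| cg_letmap : forall G A B p (t t' : Tm L G (Dia A)) (u u' : Tm L (A :: G) B),
    Conv t t' -> Conv u u' -> Conv (letmap p t u) (letmap p t' u')
| cg_ret : forall G A p (t t' : Tm L G A), Conv t t' -> Conv (ret p t) (ret p t')
| cg_letin : forall G A B p (t t' : Tm L G (Dia A)) (u u' : Tm L (A :: G) (Dia B)),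
    Conv t t' -> Conv u u' -> Conv (letin p t u) (letin p t' u')
| ax_unit_eta : forall G (t : Tm L G Unit), Conv t tunit
| ax_prod_eta : forall G A B (t : Tm L G (Prod A B)), Conv t (pair (fst_ t) (snd_ t))
| ax_fst_beta : forall G A B (t : Tm L G A) (u : Tm L G B), Conv (fst_ (pair t u)) t
| ax_snd_beta : forall G A B (t : Tm L G A) (u : Tm L G B), Conv (snd_ (pair t u)) u
| ax_arr_eta : forall G A B (t : Tm L G (Arr A B)), Conv t (lam (app (wk t) (var vz)))
| ax_arr_beta : forall G A B (t : Tm L (A :: G) B) (u : Tm L G A),
    Conv (app (lam t) u) (subst1 u t)
| ax_letmap_eta : forall G A p (t : Tm L G (Dia A)), Conv t (letmap p t (var vz))
| ax_letmap_assoc : forall G A B C p (t : Tm L G (Dia A)) (u : Tm L (A :: G) B)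
      (u' : Tm L (B :: G) C),
    Conv (letmap p (letmap p t u) u') (letmap p t (substw u u'))
| ax_letmap_ret : forall G A B p q (t : Tm L G A) (u : Tm L (A :: G) B),
    Conv (letmap p (ret q t) u) (ret q (subst1 t u))
| ax_let_letmap : forall G A B C p q (t : Tm L G (Dia A)) (u : Tm L (A :: G) B)
      (u' : Tm L (B :: G) (Dia C)),
    Conv (letin q (letmap p t u) u') (letin q t (substw u u'))
| ax_letmap_let : forall G A B C p q (t : Tm L G (Dia A)) (u : Tm L (A :: G) (Dia B))
      (u' : Tm L (B :: G) C),
    Conv (letmap p (letin q t u) u') (letin q t (letmap p u (wk1 u')))
| ax_let_assoc : forall G A B C q (t : Tm L G (Dia A)) (u : Tm L (A :: G) (Dia B))
      (u' : Tm L (B :: G) (Dia C)),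
    Conv (letin q (letin q t u) u') (letin q t (letin q u (wk1 u')))
| ax_let_beta : forall G A B q r (t : Tm L G A) (u : Tm L (A :: G) (Dia B)),
    Conv (letin q (ret r t) u) (subst1 t u)
| ax_let_eta : forall G A q r (t : Tm L G (Dia A)),
    Conv t (letin q t (ret r (var vz))).

(** * Proof-relevant frames *)

Record SFrame : Type := {
  W : Type;
  Ri : W -> W -> Type;
  Rm : W -> W -> Type;
  refl_i : forall w, Ri w w;
  trans_i : forall u v w, Ri u v -> Ri v w -> Ri u w;
  trans_i_refl_l : forall u v (i : Ri u v), trans_i _ _ _ (refl_i u) i = i;
  trans_i_refl_r : forall u v (i : Ri u v), trans_i _ _ _ i (refl_i v) = i;
  trans_i_assoc : forall u v w x (i1 : Ri u v) (i2 : Ri v w) (i3 : Ri w x),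
      trans_i _ _ _ (trans_i _ _ _ i1 i2) i3 = trans_i _ _ _ i1 (trans_i _ _ _ i2 i3);
  factor : forall w w' v, Ri w w' -> Rm w v -> {v' : W & (Rm w' v' * Ri v v')%type};
  factor_refl : forall w v (m : Rm w v),
      factor _ _ _ (refl_i w) m = existT _ v (m, refl_i v);
  factor_trans : forall w w' w'' v (i1 : Ri w w') (i2 : Ri w' w'') (m : Rm w v),
      factor _ _ _ (trans_i _ _ _ i1 i2) m =
      (let f1 := factor _ _ _ i1 m in
       let f2 := factor _ _ _ i2 (fst (projT2 f1)) in
       existT _ (projT1 f2)
         (fst (projT2 f2), trans_i _ _ _ (snd (projT2 f1)) (snd (projT2 f2))));
  incl : forall w v, Rm w v -> Ri w v;
  incl_factor : forall w w' v (i : Ri w w') (m : Rm w v),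
      trans_i _ _ _ i (incl _ _ (fst (projT2 (factor _ _ _ i m)))) =
      trans_i _ _ _ (incl _ _ m) (snd (projT2 (factor _ _ _ i m)))
}.
Arguments W _ : clear implicits.
Arguments Ri {_} _ _.
Arguments Rm {_} _ _.
Arguments refl_i {_} _.
Arguments trans_i {_ _ _ _} _ _.
Arguments factor {_ _ _ _} _ _.
Arguments incl {_ _ _} _.

Record ReflM (F : SFrame) : Type := {
  refl_m : forall w, @Rm F w w;
  factor_refl_m : forall w w' (i : Ri w w'),
      factor i (refl_m w) = existT _ w' (refl_m w', i);
  incl_refl_m : forall w, incl (refl_m w) = refl_i w
}.
Arguments refl_m {_} _ _.

Record TransM (F : SFrame) : Type := {
  trans_m : forall u v w, @Rm F u v -> Rm v w -> Rm u w;
  trans_m_assoc : forall u v w x (m1 : Rm u v) (m2 : Rm v w) (m3 : Rm w x),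
      trans_m _ _ _ (trans_m _ _ _ m1 m2) m3 = trans_m _ _ _ m1 (trans_m _ _ _ m2 m3);
  factor_trans_m : forall u u' v w (i : Ri u u') (m1 : Rm u v) (m2 : Rm v w),
      factor i (trans_m _ _ _ m1 m2) =
      (let f1 := factor i m1 in
       let f2 := factor (snd (projT2 f1)) m2 in
       existT _ (projT1 f2)
         (trans_m _ _ _ (fst (projT2 f1)) (fst (projT2 f2)), snd (projT2 f2)));
  incl_trans_m : forall u v w (m1 : Rm u v) (m2 : Rm v w),
      incl (trans_m _ _ _ m1 m2) = trans_i (incl m1) (incl m2)
}.
Arguments trans_m {_} _ {_ _ _} _ _.

Definition MLUnits (F : SFrame) (r : ReflM F) (t : TransM F) : Prop :=
  forall u v (m : @Rm F u v),
    trans_m t (refl_m r u) m = m /\ trans_m t m (refl_m r v) = m.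

Definition Frame (L : Calc) : Type :=
  match L with
  | cS  => SFrame
  | cSR => {F : SFrame & ReflM F}
  | cSJ => {F : SFrame & TransM F}
  | cML => {F : SFrame & {r : ReflM F & {t : TransM F | MLUnits F r t}}}
  end.

Definition frame_base (L : Calc) : Frame L -> SFrame :=
  match L return Frame L -> SFrame with
  | cS => fun F => F
  | cSR => fun F => projT1 F
  | cSJ => fun F => projT1 F
  | cML => fun F => projT1 F
  end.

Definition frame_refl (L : Calc) : hasRet L = true -> forall F : Frame L, ReflM (frame_base L F) :=
  match L return hasRet L = true -> forall F : Frame L, ReflM (frame_base L F) with
  | cS => fun e => False_rect _ (Bool.diff_false_true e)
  | cSR => fun _ F => projT2 F
  | cSJ => fun e => False_rect _ (Bool.diff_false_true e)
  | cML => fun _ F => projT1 (projT2 F)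
  end.

Definition frame_trans (L : Calc) : hasLet L = true -> forall F : Frame L, TransM (frame_base L F) :=
  match L return hasLet L = true -> forall F : Frame L, TransM (frame_base L F) with
  | cS => fun e => False_rect _ (Bool.diff_false_true e)
  | cSR => fun e => False_rect _ (Bool.diff_false_true e)
  | cSJ => fun _ F => projT2 F
  | cML => fun _ F => proj1_sig (projT2 (projT2 F))
  end.

(** Models: a frame together with a presheaf (valuation of the base type). *)
Record Model (L : Calc) : Type := {
  m_frame : Frame L;
  m_V : W (frame_base L m_frame) -> Type;
  m_Vtr : forall w w', @Ri (frame_base L m_frame) w w' -> m_V w -> m_V w';
  m_Vtr_refl : forall w (x : m_V w), m_Vtr w w (refl_i w) x = x;
  m_Vtr_trans : forall w w' w'' (i1 : Ri w w') (i2 : Ri w' w'') (x : m_V w),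
      m_Vtr w w'' (trans_i i1 i2) x = m_Vtr w' w'' i2 (m_Vtr w w' i1 x)
}.
Arguments m_frame {L} _.
Arguments m_V {L} _ _.
Arguments m_Vtr {L} _ {_ _} _ _.

Definition mbase {L} (M : Model L) : SFrame := frame_base L (m_frame M).

Fixpoint sem {L} (M : Model L) (A : Ty) (w : W (mbase M)) : Type :=
  match A with
  | Base => m_V M w
  | Unit => unit
  | Prod A B => (sem M A w * sem M B w)%type
  | Arr A B => forall w', Ri w w' -> sem M A w' -> sem M B w'
  | Dia A => {v : W (mbase M) & (Rm w v * sem M A v)%type}
  end.

Fixpoint sem_tr {L} (M : Model L) (A : Ty) {w w' : W (mbase M)} (i : Ri w w')
  : sem M A w -> sem M A w' :=
  match A return sem M A w -> sem M A w' with
  | Base => fun x => m_Vtr M i x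
  | Unit => fun _ => tt
  | Prod A B => fun p => (sem_tr M A i (fst p), sem_tr M B i (snd p))
  | Arr A B => fun f w'' i' a => f w'' (trans_i i i') a
  | Dia A => fun d =>
      let fc := factor i (fst (projT2 d)) in
      existT _ (projT1 fc) (fst (projT2 fc), sem_tr M A (snd (projT2 fc)) (snd (projT2 d)))
  end.

Fixpoint Env {L} (M : Model L) (G : Ctx) (w : W (mbase M)) : Type :=
  match G with
  | [] => unit
  | A :: G => (Env M G w * sem M A w)%type
  end.

Fixpoint env_tr {L} (M : Model L) (G : Ctx) {w w' : W (mbase M)} (i : Ri w w')
  : Env M G w -> Env M G w' :=
  match G return Env M G w -> Env M G w' with
  | [] => fun _ => tt
  | A :: G => fun g => (env_tr M G i (fst g), sem_tr M A i (snd g))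
  end.

Fixpoint lookup {L} (M : Model L) {G A} (x : Var G A)
  : forall w, Env M G w -> sem M A w :=
  match x in Var G' A' return forall w, Env M G' w -> sem M A' w with
  | vz => fun w g => snd g
  | vs x' => fun w g => lookup M x' w (fst g)
  end.

Fixpoint eval {L} (M : Model L) {G A} (t : Tm L G A)
  : forall w, Env M G w -> sem M A w :=
  match t in Tm _ G' A' return forall w, Env M G' w -> sem M A' w with
  | var x => fun w g => lookup M x w g
  | tunit => fun _ _ => tt
  | pair t u => fun w g => (eval M t w g, eval M u w g)
  | fst_ t => fun w g => fst (eval M t w g)
  | snd_ t => fun w g => snd (eval M t w g)
  | @lam _ G0 _ _ t => fun w g => fun w' i a => eval M t w' (env_tr M G0 i g, a)
  | app t u => fun w g => eval M t w g w (refl_i w) (eval M u w g)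
  | @letmap _ G0 _ _ p t u => fun w g =>
      let d := eval M t w g in
      existT _ (projT1 d)
        (fst (projT2 d),
         eval M u (projT1 d) (env_tr M G0 (incl (fst (projT2 d))) g, snd (projT2 d)))
  | ret p t => fun w g =>
      existT _ w (refl_m (frame_refl L p (m_frame M)) w, eval M t w g)
  | @letin _ G0 _ _ p t u => fun w g =>
      let d := eval M t w g in
      let e := eval M u (projT1 d)
                 (env_tr M G0 (incl (fst (projT2 d))) g, snd (projT2 d)) in
      existT _ (projT1 e)
        (trans_m (frame_trans L p (m_frame M)) (fst (projT2 d)) (fst (projT2 e)),
         snd (projT2 e))
  end.

(** Normalisation by evaluation in a single universal model.  Its worlds are
    contexts, its intuitionistic accessibility relation is renaming, and its
    modal accessibility relation is given by telescopes of modal binders, so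
    that a value of type [Dia A] is a telescope together with a value of [A]
    in the extended context.  Values reify back to terms, and a Kripke logical
    relation between terms and values shows that every term is convertible to
    the reification of its value in the environment of reflected variables.
    Hence two terms with equal interpretations in this model are convertible. *)

From Pilot Require Import Defs.
From Stdlib Require Import Bool FunctionalExtensionality Eqdep_dec.
From Stdlib Require List.
Import List.ListNotations.
Local Open Scope list_scope.

Lemma bool_true_irrelevance (b : bool) (p q : b = true) : p = q.
Proof. apply UIP_dec, bool_dec. Qed.

(** Case analysis on a variable of a non-empty context, without the axiom
    that [dependent destruction] would use. *)
Definition var_case {G B} (P : forall A, Var (B :: G) A -> Prop)
  (h0 : P B vz) (hs : forall A (x : Var G A), P A (vs x)) : forall A x, P A x :=
  fun A x =>
  match x as x0 in Var G0 A0 return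
    (match G0 return Var G0 A0 -> Prop with
     | [] => fun _ => True
     | B0 :: G1 => fun x => forall P : (forall A, Var (B0 :: G1) A -> Prop),
          P B0 vz -> (forall A x, P A (vs x)) -> P A0 x
     end) x0 with
  | vz => fun P h0 hs => h0
  | vs x' => fun P h0 hs => hs _ x'
  end P h0 hs.

Section Substitution.
Variable L : Calc.

(** The composition laws are stated for any map pointwise equal to the
    composite, so that the binder case of each is the same law for the lifted
    maps and no extensionality is needed. *)
Lemma liftR_comp G D E B (r1 : Ren G D) (r2 : Ren D E) (r3 : Ren G E) :
  (forall A x, r2 A (r1 A x) = r3 A x) ->
  forall A x, liftR (B := B) r2 A (liftR r1 A x) = liftR r3 A x.
Proof. intros H; apply var_case; cbn; congruence. Qed.

Lemma liftR_id G B (r : Ren G G) :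
  (forall A x, r A x = x) -> forall A x, liftR (B := B) r A x = x.
Proof. intros H; apply var_case; cbn; congruence. Qed.

Lemma ren_ren G A (t : Tm L G A) :
  forall D E (r1 : Ren G D) (r2 : Ren D E) (r3 : Ren G E),
  (forall B x, r2 B (r1 B x) = r3 B x) -> ren r2 (ren r1 t) = ren r3 t.
Proof. induction t; intros; cbn; f_equal; eauto using liftR_comp. Qed.

Lemma ren_id G A (t : Tm L G A) :
  forall r : Ren G G, (forall B x, r B x = x) -> ren r t = t.
Proof. induction t; intros; cbn; f_equal; eauto using liftR_id. Qed.

Lemma liftS_ren G D E B (r : Ren G D) (s : Sub L D E) (s' : Sub L G E) :
  (forall A x, s A (r A x) = s' A x) ->
  forall A x, liftS (B := B) s A (liftR r A x) = liftS s' A x.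
Proof. intros H; apply var_case; cbn; [reflexivity | intros; now rewrite H]. Qed.

Lemma sub_ren G A (t : Tm L G A) :
  forall D E (r : Ren G D) (s : Sub L D E) (s' : Sub L G E),
  (forall B x, s B (r B x) = s' B x) -> sub s (ren r t) = sub s' t.
Proof. induction t; intros; cbn; f_equal; eauto using liftS_ren. Qed.

Lemma ren_liftS G D E B (s : Sub L G D) (r : Ren D E) (s' : Sub L G E) :
  (forall A x, ren r (s A x) = s' A x) ->
  forall A x, ren (liftR (B := B) r) (liftS s A x) = liftS s' A x.
Proof.
  intros H; apply var_case; cbn; [reflexivity|]; intros A x.
  rewrite <- H; unfold wk.
  transitivity (ren (fun _ y => vs (B := B) (r _ y)) (s A x)); [|symmetry];
    apply ren_ren; reflexivity.
Qed.

Lemma ren_sub G A (t : Tm L G A) :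
  forall D E (s : Sub L G D) (r : Ren D E) (s' : Sub L G E),
  (forall B x, ren r (s B x) = s' B x) -> ren r (sub s t) = sub s' t.
Proof. induction t; intros; cbn; f_equal; eauto using ren_liftS. Qed.

Lemma sub_liftS G D E B (s1 : Sub L G D) (s2 : Sub L D E) (s3 : Sub L G E) :
  (forall A x, sub s2 (s1 A x) = s3 A x) ->
  forall A x, sub (liftS (B := B) s2) (liftS s1 A x) = liftS s3 A x.
Proof.
  intros H; apply var_case; cbn; [reflexivity|]; intros A x.
  rewrite <- H; unfold wk.
  transitivity (sub (fun _ y => wk (B := B) (s2 _ y)) (s1 A x));
    [apply sub_ren | symmetry; apply ren_sub]; reflexivity.
Qed.

Lemma sub_sub G A (t : Tm L G A) :
  forall D E (s1 : Sub L G D) (s2 : Sub L D E) (s3 : Sub L G E),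
  (forall B x, sub s2 (s1 B x) = s3 B x) -> sub s2 (sub s1 t) = sub s3 t.
Proof. induction t; intros; cbn; f_equal; eauto using sub_liftS. Qed.

Lemma liftS_var G D B (s : Sub L G D) (r : Ren G D) :
  (forall A x, s A x = var (r A x)) ->
  forall A x, liftS (B := B) s A x = var (liftR r A x).
Proof. intros H; apply var_case; cbn; [reflexivity | intros; now rewrite H]. Qed.

Lemma sub_var G A (t : Tm L G A) :
  forall D (s : Sub L G D) (r : Ren G D),
  (forall B x, s B x = var (r B x)) -> sub s t = ren r t.
Proof. induction t; intros; cbn; f_equal; eauto using liftS_var. Qed.

Lemma sub_id G A (t : Tm L G A) : sub idS t = t.
Proof.
  rewrite (sub_var _ _ t _ _ (fun _ x => x)) by reflexivity.
  now apply ren_id.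
Qed.

Lemma ren_wk G D A B (r : Ren G D) (t : Tm L G A) :
  ren (liftR r) (wk (B := B) t) = wk (ren r t).
Proof.
  unfold wk; transitivity (ren (fun _ x => vs (B := B) (r _ x)) t);
    [|symmetry]; apply ren_ren; reflexivity.
Qed.

Lemma ren_wk1 G D A B C (r : Ren G D) (t : Tm L (B :: G) C) :
  ren (liftR (liftR r)) (wk1 (A := A) t) = wk1 (ren (liftR r) t).
Proof.
  unfold wk1;
    transitivity (ren (fun _ x => liftR (B := B) (liftR (B := A) r) _ (liftR wkR _ x)) t);
    [|symmetry]; apply ren_ren; [reflexivity | apply var_case; reflexivity].
Qed.

Lemma ren_subst1 G D A B (r : Ren G D) (u : Tm L G A) (t : Tm L (A :: G) B) :
  ren r (subst1 u t) = subst1 (ren r u) (ren (liftR r) t).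
Proof.
  unfold subst1; transitivity (sub (fun _ x => ren r (scons u idS _ x)) t);
    [apply ren_sub; reflexivity | symmetry; apply sub_ren; apply var_case; reflexivity].
Qed.

Lemma ren_substw G D A B C (r : Ren G D) (u : Tm L (A :: G) B) (t : Tm L (B :: G) C) :
  ren (liftR r) (substw u t) = substw (ren (liftR r) u) (ren (liftR r) t).
Proof.
  unfold substw;
    transitivity (sub (fun _ x => ren (liftR r) (scons u (fun _ y => var (vs y)) _ x)) t);
    [apply ren_sub; reflexivity | symmetry; apply sub_ren; apply var_case; reflexivity].
Qed.

Lemma conv_ren G A (t u : Tm L G A) :
  Conv t u -> forall D (r : Ren G D), Conv (ren r t) (ren r u).
Proof.
  induction 1; intros D0 r0; cbn; try (econstructor; eauto; fail).
  - rewrite ren_wk. apply ax_arr_eta.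
  - rewrite ren_subst1. apply ax_arr_beta.
  - rewrite ren_substw. apply ax_letmap_assoc.
  - rewrite ren_subst1. apply ax_letmap_ret.
  - rewrite ren_substw. apply ax_let_letmap.
  - rewrite ren_wk1. apply ax_letmap_let.
  - rewrite ren_wk1. apply ax_let_assoc.
  - rewrite ren_subst1. apply ax_let_beta.
Qed.
Lemma conv_of_eq G A (t u : Tm L G A) : t = u -> Conv t u.
Proof. intros <-; apply cv_refl. Qed.

Lemma sub_liftS_scons G D E A B (s : Sub L G D) (r : Ren D E) (a : Tm L E A)
  (u : Tm L (A :: G) B) :
  sub (scons a (fun _ x => var (r _ x))) (sub (liftS s) u) =
  sub (scons a (fun _ x => ren r (s _ x))) u.
Proof.
  apply sub_sub; apply var_case; [reflexivity|]; intros; cbn.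
  unfold wk; rewrite (sub_ren _ _ _ _ _ _ _ (fun _ y => var (r _ y))) by reflexivity.
  now apply sub_var.
Qed.

Lemma subst1_ren_sub_liftS G D E A B (s : Sub L G D) (r : Ren D E) (a : Tm L E A)
  (u : Tm L (A :: G) B) :
  subst1 a (ren (liftR r) (sub (liftS s) u)) = sub (scons a (fun _ x => ren r (s _ x))) u.
Proof.
  rewrite <- sub_liftS_scons; unfold subst1.
  apply sub_ren; apply var_case; reflexivity.
Qed.
End Substitution.

(** * The syntactic frame of telescopes *)

(** [Tel L G D] is a telescope [let x1 = t1 in ... let xn = tn in letmap y = b in _]
    (or one ending in [ret _]) whose binders extend [G] to [D].  It is the modal
    accessibility relation of the syntactic frame; each constructor exists only
    in the calculi having the corresponding former. *)
Inductive Tel (L : Calc) : Ctx -> Ctx -> Type :=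
| tnil : forall G, hasRet L = true -> Tel L G G
| tlast : forall G A, hasLetmap L = true -> Tm L G (Dia A) -> Tel L G (A :: G)
| tcons : forall G A D, hasLet L = true -> Tm L G (Dia A) -> Tel L (A :: G) D -> Tel L G D.
Arguments tnil {L} G _.
Arguments tlast {L G A} _ _.
Arguments tcons {L G A D} _ _ _.

Section Telescopes.
Variable L : Calc.

Fixpoint tel_factor {G D} (m : Tel L G D) :
  forall G', Ren G G' -> {D' : Ctx & (Tel L G' D' * Ren D D')%type} :=
  match m in Tel _ G0 D0
    return forall G', Ren G0 G' -> {D' : Ctx & (Tel L G' D' * Ren D0 D')%type} with
  | tnil _ p => fun G' r => existT _ G' (tnil G' p, r)
  | tlast p b => fun G' r => existT _ (_ :: G') (tlast p (ren r b), liftR r)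
  | tcons p b m' => fun G' r =>
      let f := tel_factor m' (_ :: G') (liftR r) in
      existT _ (projT1 f) (tcons p (ren r b) (fst (projT2 f)), snd (projT2 f))
  end.

Fixpoint tel_incl {G D} (m : Tel L G D) : Ren G D :=
  match m in Tel _ G0 D0 return Ren G0 D0 with
  | tnil _ _ => fun _ x => x
  | tlast _ _ => wkR
  | tcons _ _ m' => fun _ x => tel_incl m' _ (vs x)
  end.

Fixpoint tel_app (q : hasLet L = true) {G D E} (m : Tel L G D) : Tel L D E -> Tel L G E :=
  match m in Tel _ G0 D0 return Tel L D0 E -> Tel L G0 E with
  | tnil _ _ => fun m2 => m2
  | tlast _ b => fun m2 => tcons q b m2
  | tcons p b m' => fun m2 => tcons p b (tel_app q m' m2)
  end.

Lemma liftR_id_eq G B : liftR (B := B) (fun _ (x : Var G _) => x) = (fun _ x => x).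
Proof.
  apply functional_extensionality_dep; intro A; apply functional_extensionality.
  now apply liftR_id.
Qed.

Lemma liftR_comp_eq G D E B (r1 : Ren G D) (r2 : Ren D E) :
  liftR (B := B) (fun A x => r2 A (r1 A x)) = (fun A x => liftR r2 A (liftR r1 A x)).
Proof.
  apply functional_extensionality_dep; intro A; apply functional_extensionality; intro x.
  symmetry; now apply liftR_comp.
Qed.

Lemma tel_factor_refl G D (m : Tel L G D) :
  tel_factor m G (fun _ x => x) = existT _ D (m, fun _ x => x).
Proof.
  induction m; cbn.
  - reflexivity.
  - now rewrite liftR_id_eq, ren_id.
  - now rewrite liftR_id_eq, IHm, ren_id.
Qed.

Lemma tel_factor_trans G D (m : Tel L G D) :
  forall G' G'' (i1 : Ren G G') (i2 : Ren G' G''),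
  tel_factor m G'' (fun A x => i2 A (i1 A x)) =
  (let f1 := tel_factor m G' i1 in
   let f2 := tel_factor (fst (projT2 f1)) G'' i2 in
   existT _ (projT1 f2)
     (fst (projT2 f2), fun A x => snd (projT2 f2) A (snd (projT2 f1) A x))).
Proof.
  induction m; intros; cbn.
  - reflexivity.
  - now rewrite liftR_comp_eq, (ren_ren _ _ _ t _ _ i1 i2 (fun A x => i2 A (i1 A x))).
  - now rewrite liftR_comp_eq, IHm, (ren_ren _ _ _ t _ _ i1 i2 (fun A x => i2 A (i1 A x))).
Qed.

Lemma tel_incl_factor G D (m : Tel L G D) :
  forall G' (i : Ren G G') A (x : Var G A),
  tel_incl (fst (projT2 (tel_factor m G' i))) A (i A x) =
  snd (projT2 (tel_factor m G' i)) A (tel_incl m A x).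
Proof.
  induction m; intros; cbn; [reflexivity | reflexivity | apply (IHm _ (liftR i) _ (vs x))].
Qed.

Lemma tel_app_assoc q G D (m1 : Tel L G D) :
  forall E F (m2 : Tel L D E) (m3 : Tel L E F),
  tel_app q (tel_app q m1 m2) m3 = tel_app q m1 (tel_app q m2 m3).
Proof. induction m1; intros; cbn; f_equal; auto. Qed.

Lemma tel_factor_app q G D (m1 : Tel L G D) :
  forall E (m2 : Tel L D E) G' (i : Ren G G'),
  tel_factor (tel_app q m1 m2) G' i =
  (let f1 := tel_factor m1 G' i in
   let f2 := tel_factor m2 _ (snd (projT2 f1)) in
   existT _ (projT1 f2) (tel_app q (fst (projT2 f1)) (fst (projT2 f2)), snd (projT2 f2))).
Proof.
  induction m1; intros; cbn; rewrite ?IHm1; try reflexivity.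
  now destruct (tel_factor m2 G' i) as [? [? ?]].
Qed.

Lemma tel_incl_app q G D (m1 : Tel L G D) :
  forall E (m2 : Tel L D E) A x,
  tel_incl (tel_app q m1 m2) A x = tel_incl m2 A (tel_incl m1 A x).
Proof. induction m1; intros; cbn; auto. Qed.

Definition syn_frame : SFrame.
Proof.
  refine {| W := Ctx; Ri := fun G D => Ren G D; Rm := Tel L;
    refl_i := fun G => fun _ x => x;
    trans_i := fun u v w r1 r2 => fun A x => r2 A (r1 A x);
    factor := fun w w' v i m => tel_factor m w' i;
    incl := fun w v m => tel_incl m |}; try reflexivity.
  - apply tel_factor_refl.
  - intros; apply tel_factor_trans.
  - intros; apply functional_extensionality_dep; intro A.
    apply functional_extensionality; intro x; apply tel_incl_factor.
Defined.

Definition syn_refl (p : hasRet L = true) : ReflM syn_frame :=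
  Build_ReflM syn_frame (fun w => tnil w p) (fun _ _ _ => eq_refl) (fun _ => eq_refl).

Definition syn_trans (q : hasLet L = true) : TransM syn_frame.
Proof.
  refine (Build_TransM syn_frame (fun u v w m1 m2 => tel_app q m1 m2) _ _ _).
  - intros; apply tel_app_assoc.
  - intros; apply tel_factor_app.
  - intros; apply functional_extensionality_dep; intro A.
    apply functional_extensionality; intro x; apply tel_incl_app.
Defined.

End Telescopes.

Lemma tel_app_nil_r L (no_letmap : hasLetmap L = false) q p G D (m : Tel L G D) :
  tel_app L q m (tnil D p) = m.
Proof.
  induction m; cbn.
  - f_equal; apply bool_true_irrelevance.
  - congruence.
  - now rewrite IHm.
Qed.

Lemma syn_ml_units : MLUnits (syn_frame cML) (syn_refl cML eq_refl) (syn_trans cML eq_refl).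
Proof. intros u v m; split; [reflexivity | now apply tel_app_nil_r]. Qed.

Definition syn_frame_of (L : Calc) : Frame L :=
  match L with
  | cS => syn_frame cS
  | cSR => existT _ (syn_frame cSR) (syn_refl cSR eq_refl)
  | cSJ => existT _ (syn_frame cSJ) (syn_trans cSJ eq_refl)
  | cML => existT _ (syn_frame cML)
             (existT _ (syn_refl cML eq_refl) (exist _ (syn_trans cML eq_refl) syn_ml_units))
  end.

Section TelescopeTerms.
Variable L : Calc.

Fixpoint tel_close {G D} (m : Tel L G D) {A} : Tm L D A -> Tm L G (Dia A) :=
  match m in Tel _ G0 D0 return Tm L D0 A -> Tm L G0 (Dia A) with
  | tnil _ p => fun s => ret p s
  | tlast p b => fun s => letmap p b s
  | tcons p b m' => fun s => letin p b (tel_close m' s)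
  end.

Lemma ren_tel_close G D (m : Tel L G D) :
  forall A (s : Tm L D A) G' (r : Ren G G'),
  ren r (tel_close m s) =
  tel_close (fst (projT2 (tel_factor L m G' r))) (ren (snd (projT2 (tel_factor L m G' r))) s).
Proof. induction m; intros; cbn; rewrite ?IHm; reflexivity. Qed.

Lemma tel_close_cong G D (m : Tel L G D) :
  forall A (s s' : Tm L D A), Conv s s' -> Conv (tel_close m s) (tel_close m s').
Proof.
  induction m; intros; cbn; [apply cg_ret | apply cg_letmap | apply cg_letin];
    auto using cv_refl.
Qed.

Fixpoint tel_prefix (q : hasLet L = true) {G D} (m : Tel L G D) {B} :
  Tm L D (Dia B) -> Tm L G (Dia B) :=
  match m in Tel _ G0 D0 return Tm L D0 (Dia B) -> Tm L G0 (Dia B) with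
  | tnil _ _ => fun X => X
  | tlast _ b => fun X => letin q b X
  | tcons p b m' => fun X => letin p b (tel_prefix q m' X)
  end.

Lemma tel_prefix_cong q G D (m : Tel L G D) :
  forall B (s s' : Tm L D (Dia B)), Conv s s' -> Conv (tel_prefix q m s) (tel_prefix q m s').
Proof. induction m; intros; cbn; auto using cg_letin, cv_refl. Qed.

Lemma tel_prefix_close q G D (m : Tel L G D) :
  forall E (m' : Tel L D E) A (s : Tm L E A),
  tel_prefix q m (tel_close m' s) = tel_close (tel_app L q m m') s.
Proof. induction m; intros; cbn; rewrite ?IHm; reflexivity. Qed.

Lemma letmap_tel_close G D (m : Tel L G D) :
  forall A B p (s : Tm L D A) (v : Tm L (A :: G) B),
  Conv (letmap p (tel_close m s) v)
       (tel_close m (sub (scons s (fun _ x => var (tel_incl L m _ x))) v)).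
Proof.
  induction m; intros; cbn.
  - apply ax_letmap_ret.
  - rewrite (bool_true_irrelevance _ p e); apply ax_letmap_assoc.
  - eapply cv_trans; [apply ax_letmap_let | apply cg_letin; [apply cv_refl|]].
    eapply cv_trans; [apply IHm|]; apply tel_close_cong, conv_of_eq.
    unfold wk1; apply sub_ren; apply var_case; reflexivity.
Qed.

Lemma letin_tel_close G D (m : Tel L G D) :
  forall A B p (s : Tm L D A) (v : Tm L (A :: G) (Dia B)),
  Conv (letin p (tel_close m s) v)
       (tel_prefix p m (sub (scons s (fun _ x => var (tel_incl L m _ x))) v)).
Proof.
  induction m; intros; cbn.
  - apply ax_let_beta.
  - apply ax_let_letmap.
  - rewrite (bool_true_irrelevance _ p e).
    eapply cv_trans; [apply ax_let_assoc | apply cg_letin; [apply cv_refl|]].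
    eapply cv_trans; [apply IHm|]; apply tel_prefix_cong, conv_of_eq.
    unfold wk1; apply sub_ren; apply var_case; reflexivity.
Qed.

Lemma letmap_conv_tel_close G D E (m : Tel L D E) A B p (t : Tm L D (Dia A)) (s0 : Tm L E A)
  (s : Sub L G D) (u : Tm L (A :: G) B) :
  Conv t (tel_close m s0) ->
  Conv (letmap p t (sub (liftS s) u))
       (tel_close m (sub (scons s0 (fun _ x => ren (tel_incl L m) (s _ x))) u)).
Proof.
  intros Hc; eapply cv_trans; [apply cg_letmap; [exact Hc | apply cv_refl]|].
  rewrite <- sub_liftS_scons; apply letmap_tel_close.
Qed.

Lemma letin_conv_tel_close G D E (m : Tel L D E) A B p (t : Tm L D (Dia A)) (s0 : Tm L E A)
  (s : Sub L G D) (u : Tm L (A :: G) (Dia B)) :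
  Conv t (tel_close m s0) ->
  Conv (letin p t (sub (liftS s) u))
       (tel_prefix p m (sub (scons s0 (fun _ x => ren (tel_incl L m) (s _ x))) u)).
Proof.
  intros Hc; eapply cv_trans; [apply cg_letin; [exact Hc | apply cv_refl]|].
  rewrite <- sub_liftS_scons; apply letin_tel_close.
Qed.
End TelescopeTerms.
Arguments tel_close {L G D} m {A} _.
Arguments tel_prefix {L} q {G D} m {B} _.

Definition tel_single {L G A} : Tm L G (Dia A) -> Tel L G (A :: G) :=
  match L as L0 return Tm L0 G (Dia A) -> Tel L0 G (A :: G) with
  | cS => tlast (L := cS) eq_refl
  | cSR => tlast (L := cSR) eq_refl
  | cSJ => tlast (L := cSJ) eq_refl
  | cML => fun t => tcons (L := cML) eq_refl t (tnil (L := cML) _ eq_refl)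
  end.

Lemma tel_close_single_eta L G A (t : Tm L G (Dia A)) :
  Conv t (tel_close (tel_single t) (var vz)).
Proof. destruct L; cbn; [apply ax_letmap_eta .. | apply ax_let_eta]. Qed.

(** The interpretation of [Defs] with the structure for [ret] and [let] passed
    separately from the frame.  Since [frame_base L] does not reduce for a
    variable calculus [L], this is what lets the syntactic frame be treated
    uniformly in [L]; [to_isem_eval] relates it to [eval]. *)
Section Interpretation.
Variable L : Calc.
Variable F : SFrame.
Variable V : W F -> Type.
Variable Vtr : forall w w', Ri w w' -> V w -> V w'.
Variable rf : hasRet L = true -> ReflM F.
Variable tf : hasLet L = true -> TransM F.

Fixpoint isem (A : Ty) (w : W F) : Type :=
  match A with
  | Base => V w
  | Unit => unit
  | Prod A B => (isem A w * isem B w)%type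
  | Arr A B => forall w', Ri w w' -> isem A w' -> isem B w'
  | Dia A => {v : W F & (Rm w v * isem A v)%type}
  end.

Fixpoint isem_tr (A : Ty) {w w' : W F} (i : Ri w w') : isem A w -> isem A w' :=
  match A return isem A w -> isem A w' with
  | Base => fun x => Vtr w w' i x
  | Unit => fun _ => tt
  | Prod A B => fun p => (isem_tr A i (fst p), isem_tr B i (snd p))
  | Arr A B => fun f w'' i' a => f w'' (trans_i i i') a
  | Dia A => fun d =>
      let fc := factor i (fst (projT2 d)) in
      existT _ (projT1 fc) (fst (projT2 fc), isem_tr A (snd (projT2 fc)) (snd (projT2 d)))
  end.

Fixpoint ienv (G : Ctx) (w : W F) : Type :=
  match G with
  | [] => unit
  | A :: G => (ienv G w * isem A w)%type
  end.

Fixpoint ienv_tr (G : Ctx) {w w' : W F} (i : Ri w w') : ienv G w -> ienv G w' :=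
  match G return ienv G w -> ienv G w' with
  | [] => fun _ => tt
  | A :: G => fun g => (ienv_tr G i (fst g), isem_tr A i (snd g))
  end.

Fixpoint ilookup {G A} (x : Var G A) : forall w, ienv G w -> isem A w :=
  match x in Var G' A' return forall w, ienv G' w -> isem A' w with
  | vz => fun w g => snd g
  | vs x' => fun w g => ilookup x' w (fst g)
  end.

Fixpoint ieval {G A} (t : Tm L G A) : forall w, ienv G w -> isem A w :=
  match t in Tm _ G' A' return forall w, ienv G' w -> isem A' w with
  | var x => fun w g => ilookup x w g
  | tunit => fun _ _ => tt
  | pair t u => fun w g => (ieval t w g, ieval u w g)
  | fst_ t => fun w g => fst (ieval t w g)
  | snd_ t => fun w g => snd (ieval t w g)
  | @lam _ G0 _ _ t => fun w g => fun w' i a => ieval t w' (ienv_tr G0 i g, a)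
  | app t u => fun w g => ieval t w g w (refl_i w) (ieval u w g)
  | @letmap _ G0 _ _ p t u => fun w g =>
      let d := ieval t w g in
      existT _ (projT1 d)
        (fst (projT2 d),
         ieval u (projT1 d) (ienv_tr G0 (incl (fst (projT2 d))) g, snd (projT2 d)))
  | ret p t => fun w g => existT _ w (refl_m (rf p) w, ieval t w g)
  | @letin _ G0 _ _ p t u => fun w g =>
      let d := ieval t w g in
      let e := ieval u (projT1 d)
                 (ienv_tr G0 (incl (fst (projT2 d))) g, snd (projT2 d)) in
      existT _ (projT1 e)
        (trans_m (tf p) (fst (projT2 d)) (fst (projT2 e)), snd (projT2 e))
  end.
End Interpretation.

Section ModelInterpretation.
Variable L : Calc.
Variable M : Model L.

Definition model_Vtr w w' (i : Ri w w') (x : m_V M w) : m_V M w' := m_Vtr M i x.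
Definition model_refl (p : hasRet L = true) : ReflM (mbase M) := frame_refl L p (m_frame M).
Definition model_trans (p : hasLet L = true) : TransM (mbase M) := frame_trans L p (m_frame M).

Notation isemM := (isem (mbase M) (m_V M)).
Notation ienvM := (ienv (mbase M) (m_V M)).
Notation ievalM := (ieval L (mbase M) (m_V M) model_Vtr model_refl model_trans).

Fixpoint to_isem (A : Ty) : forall w, sem M A w -> isemM A w :=
  match A return forall w, sem M A w -> isemM A w with
  | Base | Unit => fun w x => x
  | Prod A B => fun w p => (to_isem A w (fst p), to_isem B w (snd p))
  | Arr A B => fun w f w' i a => to_isem B w' (f w' i (of_isem A w' a))
  | Dia A => fun w d => existT _ (projT1 d) (fst (projT2 d), to_isem A _ (snd (projT2 d)))
  end
with of_isem (A : Ty) : forall w, isemM A w -> sem M A w :=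
  match A return forall w, isemM A w -> sem M A w with
  | Base | Unit => fun w x => x
  | Prod A B => fun w p => (of_isem A w (fst p), of_isem B w (snd p))
  | Arr A B => fun w f w' i a => of_isem B w' (f w' i (to_isem A w' a))
  | Dia A => fun w d => existT _ (projT1 d) (fst (projT2 d), of_isem A _ (snd (projT2 d)))
  end.

Lemma to_of_isem A : forall w (a : isemM A w), to_isem A w (of_isem A w a) = a
with of_to_isem A : forall w (a : sem M A w), of_isem A w (to_isem A w a) = a.
Proof.
  - destruct A; intros w a; cbn; rewrite ?to_of_isem, ?of_to_isem; try reflexivity.
    + now destruct a.
    + apply functional_extensionality_dep; intro w'.
      apply functional_extensionality_dep; intro i.
      apply functional_extensionality; intro x.
      now rewrite !to_of_isem.
    + now destruct a as [v [m x]].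
  - destruct A; intros w a; cbn; rewrite ?to_of_isem, ?of_to_isem; try reflexivity.
    + now destruct a.
    + apply functional_extensionality_dep; intro w'.
      apply functional_extensionality_dep; intro i.
      apply functional_extensionality; intro x.
      now rewrite !of_to_isem.
    + now destruct a as [v [m x]].
Qed.

Lemma to_isem_tr A w w' (i : Ri w w') (a : sem M A w) :
  to_isem A w' (sem_tr M A i a) = isem_tr (mbase M) (m_V M) model_Vtr A i (to_isem A w a).
Proof. revert w w' i a; induction A; intros; cbn; rewrite ?IHA, ?IHA1, ?IHA2; reflexivity. Qed.

Fixpoint to_ienv (G : Ctx) : forall w, Env M G w -> ienvM G w :=
  match G with
  | [] => fun w g => g
  | A :: G => fun w g => (to_ienv G w (fst g), to_isem A w (snd g))
  end.

Fixpoint of_ienv (G : Ctx) : forall w, ienvM G w -> Env M G w :=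
  match G with
  | [] => fun w g => g
  | A :: G => fun w g => (of_ienv G w (fst g), of_isem A w (snd g))
  end.

Lemma to_of_ienv G w (g : ienvM G w) : to_ienv G w (of_ienv G w g) = g.
Proof.
  induction G; cbn; [now destruct g|].
  now rewrite IHG, to_of_isem; destruct g.
Qed.

Lemma to_ienv_tr G w w' (i : Ri w w') (g : Env M G w) :
  to_ienv G w' (env_tr M G i g) = ienv_tr (mbase M) (m_V M) model_Vtr G i (to_ienv G w g).
Proof. induction G; cbn; [reflexivity | now rewrite IHG, to_isem_tr]. Qed.

Lemma to_isem_lookup G A (x : Var G A) w (g : Env M G w) :
  to_isem A w (lookup M x w g) = ilookup (mbase M) (m_V M) x w (to_ienv G w g).
Proof. induction x; cbn; auto. Qed.

Lemma to_isem_eval G A (t : Tm L G A) w (g : Env M G w) :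
  to_isem A w (eval M t w g) = ievalM t w (to_ienv G w g).
Proof.
  revert w g; induction t; intros; simpl.
  - apply to_isem_lookup.
  - reflexivity.
  - now rewrite IHt1, IHt2.
  - now rewrite <- IHt.
  - now rewrite <- IHt.
  - apply functional_extensionality_dep; intro w'.
    apply functional_extensionality_dep; intro i.
    apply functional_extensionality; intro x.
    now rewrite IHt; simpl; rewrite to_ienv_tr, to_of_isem.
  - now rewrite <- IHt1, <- IHt2; simpl; rewrite of_to_isem.
  - now rewrite IHt2; simpl; rewrite to_ienv_tr, <- IHt1.
  - now rewrite IHt.
  - rewrite <- IHt1; simpl; rewrite <- to_ienv_tr.
    destruct (eval M t1 w g) as [v [m a]]; simpl.
    exact (f_equal (fun d : isemM (Dia B) v =>
             existT (fun v' => (Rm w v' * isemM B v')%type) (projT1 d)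
               (trans_m (model_trans e) m (fst (projT2 d)), snd (projT2 d)))
             (IHt2 v (env_tr M G (incl m) g, a))).
Qed.

Lemma ieval_eq_of_eval_eq G A (t u : Tm L G A) :
  (forall w g, eval M t w g = eval M u w g) ->
  forall w g, ievalM t w g = ievalM u w g.
Proof.
  intros H w g; rewrite <- (to_of_ienv G w g), <- !to_isem_eval; f_equal; apply H.
Qed.
End ModelInterpretation.

(** * Normalisation by evaluation *)

Section NbE.
Variable L : Calc.

Definition tm_base : W (syn_frame L) -> Type := fun G => Tm L G Base.
Definition tm_base_tr (G D : Ctx) (r : Ren G D) (t : tm_base G) : tm_base D := ren r t.

Notation val := (isem (syn_frame L) tm_base).
Notation val_tr := (isem_tr (syn_frame L) tm_base tm_base_tr).

Fixpoint reify (A : Ty) : forall G, val A G -> Tm L G A :=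
  match A return forall G, val A G -> Tm L G A with
  | Base => fun G a => a
  | Unit => fun G a => tunit
  | Prod A B => fun G a => pair (reify A G (fst a)) (reify B G (snd a))
  | Arr A B => fun G f => lam (reify B (A :: G) (f (A :: G) wkR (reflect A (A :: G) (var vz))))
  | Dia A => fun G d => tel_close (fst (projT2 d)) (reify A _ (snd (projT2 d)))
  end
with reflect (A : Ty) : forall G, Tm L G A -> val A G :=
  match A return forall G, Tm L G A -> val A G with
  | Base => fun G t => t
  | Unit => fun G t => tt
  | Prod A B => fun G t => (reflect A G (fst_ t), reflect B G (snd_ t))
  | Arr A B => fun G t G' r a => reflect B G' (app (ren r t) (reify A G' a))
  | Dia A => fun G t => existT _ (A :: G) (tel_single t, reflect A (A :: G) (var vz))
  end.

Fixpoint related (A : Ty) : forall G, Tm L G A -> val A G -> Prop :=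
  match A return forall G, Tm L G A -> val A G -> Prop with
  | Base => fun G t a => Conv t a
  | Unit => fun _ _ _ => True
  | Prod A B => fun G t a => related A G (fst_ t) (fst a) /\ related B G (snd_ t) (snd a)
  | Arr A B => fun G t f => forall G' (r : Ren G G') s a,
      related A G' s a -> related B G' (app (ren r t) s) (f G' r a)
  | Dia A => fun G t d => exists s, related A (projT1 d) s (snd (projT2 d)) /\
      Conv t (tel_close (fst (projT2 d)) s)
  end.

Lemma related_conv A : forall G (t t' : Tm L G A) a,
  Conv t t' -> related A G t a -> related A G t' a.
Proof.
  induction A; intros G t t' a Htt' H; cbn in *.
  - eauto using cv_trans, cv_sym.
  - trivial.
  - destruct H; split; [eapply IHA1 | eapply IHA2]; eauto using cg_fst, cg_snd.
  - intros G' r s a' Hs; eapply IHA2; [|apply H; eauto].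
    apply cg_app; [apply conv_ren; auto | apply cv_refl].
  - destruct H as [s [Hs Hts]]; exists s; eauto using cv_trans, cv_sym.
Qed.

Lemma related_tr A : forall G (t : Tm L G A) a, related A G t a ->
  forall G' (r : Ren G G'), related A G' (ren r t) (val_tr A r a).
Proof.
  induction A; intros G t a H G' r; cbn in *.
  - now apply conv_ren.
  - trivial.
  - destruct H as [H1 H2]; split; [exact (IHA1 _ _ _ H1 G' r) | exact (IHA2 _ _ _ H2 G' r)].
  - intros G'' r' s a' Hs.
    rewrite (ren_ren _ _ _ t _ _ r r' (fun B x => r' B (r B x))) by reflexivity.
    now apply H.
  - destruct H as [s [Hs Hts]].
    exists (ren (snd (projT2 (tel_factor L (fst (projT2 a)) G' r))) s); split.
    + now apply IHA.
    + rewrite <- ren_tel_close; now apply conv_ren.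
Qed.

Lemma reify_reflect A :
  (forall G (t : Tm L G A) a, related A G t a -> Conv t (reify A G a)) /\
  (forall G (t : Tm L G A), related A G t (reflect A G t)).
Proof.
  induction A as [| | A1 [reify1 reflect1] A2 [reify2 reflect2]
                  | A1 [reify1 reflect1] A2 [reify2 reflect2] | A [reifyA reflectA]];
    split; intros; cbn in *.
  - assumption.
  - apply cv_refl.
  - apply ax_unit_eta.
  - trivial.
  - destruct H; eapply cv_trans; [apply ax_prod_eta | apply cg_pair; auto].
  - split; auto.
  - eapply cv_trans; [apply ax_arr_eta | apply cg_lam].
    apply reify2, H, reflect1.
  - intros G' r s a Hs; eapply related_conv; [|apply reflect2].
    apply cg_app; [apply cv_refl | apply cv_sym; auto].
  - destruct H as [s [Hs Hts]]; eapply cv_trans; [apply Hts | apply tel_close_cong; auto].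
  - exists (var vz); split; [apply reflectA | apply tel_close_single_eta].
Qed.
End NbE.

Section Fundamental.
Variable L : Calc.
Variable rf : hasRet L = true -> ReflM (syn_frame L).
Variable tf : hasLet L = true -> TransM (syn_frame L).
Hypothesis rf_nil : forall p w, refl_m (rf p) w = tnil w p.
Hypothesis tf_app : forall p u v w (m1 : Tel L u v) (m2 : Tel L v w),
  trans_m (tf p) m1 m2 = tel_app L p m1 m2.

Notation val := (isem (syn_frame L) (tm_base L)).
Notation venv := (ienv (syn_frame L) (tm_base L)).
Notation venv_tr := (ienv_tr (syn_frame L) (tm_base L) (tm_base_tr L)).
Notation ev := (ieval L (syn_frame L) (tm_base L) (tm_base_tr L) rf tf).

Fixpoint related_env (G : Ctx) : forall D, Sub L G D -> venv G D -> Prop :=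
  match G return forall D, Sub L G D -> venv G D -> Prop with
  | [] => fun _ _ _ => True
  | A :: G => fun D s g =>
      related_env G D (fun _ x => s _ (vs x)) (fst g) /\ related L A D (s _ vz) (snd g)
  end.

Lemma related_env_tr G : forall D s g, related_env G D s g ->
  forall D' (r : Ren D D'), related_env G D' (fun _ x => ren r (s _ x)) (venv_tr G r g).
Proof.
  induction G; intros D s g H D' r; cbn in *; [trivial|].
  destruct H as [Hs Hz]; split; [apply (IHG _ _ _ Hs) | apply related_tr; exact Hz].
Qed.

Lemma related_lookup G A (x : Var G A) : forall D s g, related_env G D s g ->
  related L A D (s A x) (ilookup (syn_frame L) (tm_base L) x D g).
Proof. induction x; intros D s g [Hs Hz]; [exact Hz | exact (IHx _ _ _ Hs)]. Qed.

Lemma related_eval G A (t : Tm L G A) : forall D (s : Sub L G D) g,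
  related_env G D s g -> related L A D (sub s t) (ev t D g).
Proof.
  induction t; intros D s g H; cbn.
  - now apply related_lookup.
  - trivial.
  - split.
    + eapply related_conv; [apply cv_sym, ax_fst_beta | apply IHt1; auto].
    + eapply related_conv; [apply cv_sym, ax_snd_beta | apply IHt2; auto].
  - exact (proj1 (IHt D s g H)).
  - exact (proj2 (IHt D s g H)).
  - intros G' r s' a Hs.
    eapply related_conv;
      [| apply (IHt G' (scons s' (fun _ x => ren r (s _ x))) (_, a));
         split; [apply related_env_tr; auto | exact Hs]].
    rewrite <- subst1_ren_sub_liftS; apply cv_sym, ax_arr_beta.
  - pose proof (IHt1 D s g H D (fun _ x => x) _ _ (IHt2 D s g H)) as K.
    rewrite ren_id in K by reflexivity; exact K.
  - destruct (IHt1 D s g H) as [s0 [Hs0 Hc]].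
    set (m := fst (projT2 (ev t1 D g))).
    exists (sub (scons s0 (fun _ x => ren (tel_incl L m) (s _ x))) t2).
    split; [apply IHt2; split; [apply related_env_tr; auto | exact Hs0]|].
    apply letmap_conv_tel_close, Hc.
  - rewrite rf_nil; exists (sub s t); split; [apply IHt; auto | apply cv_refl].
  - destruct (IHt1 D s g H) as [s0 [Hs0 Hc]].
    set (m := fst (projT2 (ev t1 D g))).
    destruct (IHt2 _ (scons s0 (fun _ x => ren (tel_incl L m) (s _ x)))
      (venv_tr G (tel_incl L m) g, snd (projT2 (ev t1 D g)))) as [s2 [Hs2 Hc2]].
    { split; [apply related_env_tr; auto | exact Hs0]. }
    exists s2; split; [exact Hs2|].
    rewrite tf_app, <- tel_prefix_close.
    eapply cv_trans; [apply letin_conv_tel_close, Hc | apply tel_prefix_cong, Hc2].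
Qed.

Fixpoint id_venv (G : Ctx) : venv G G :=
  match G return venv G G with
  | [] => tt
  | A :: G => (venv_tr G (@wkR G A) (id_venv G), reflect L A (A :: G) (var vz))
  end.

Lemma related_env_id G : related_env G G idS (id_venv G).
Proof.
  induction G; cbn; [trivial|]; split.
  - apply (related_env_tr _ _ _ _ IHG (a :: G) wkR).
  - apply reify_reflect.
Qed.

Lemma conv_reify_eval G A (t : Tm L G A) : Conv t (reify L A G (ev t G (id_venv G))).
Proof.
  apply reify_reflect; rewrite <- (sub_id _ _ _ t) at 1.
  apply related_eval, related_env_id.
Qed.

Lemma ieval_complete G A (t u : Tm L G A) :
  ev t G (id_venv G) = ev u G (id_venv G) -> Conv t u.
Proof.
  intros E; eapply cv_trans; [apply conv_reify_eval|].
  rewrite E; apply cv_sym, conv_reify_eval.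
Qed.
End Fundamental.

Definition syn_model (L : Calc) : Model L.
Proof.
  destruct L; match goal with |- Model ?L =>
    refine (Build_Model L (syn_frame_of L) (tm_base L) (tm_base_tr L) _ _);
    intros; [apply ren_id | symmetry; apply ren_ren]; reflexivity end.
Defined.

Lemma syn_model_complete (L : Calc) G A (t u : Tm L G A) :
  (forall w g, eval (syn_model L) t w g = eval (syn_model L) u w g) -> Conv t u.
Proof.
  intros H; pose proof (ieval_eq_of_eval_eq L (syn_model L) G A t u H) as H'.
  destruct L; eapply ieval_complete; try apply H'; cbn; intros; try discriminate;
    f_equal; apply bool_true_irrelevance.
Qed.

Theorem corollary5p2 (L : Calc) (G : Ctx) (A : Ty) (t u : Tm L G A) :
  (forall (M : Model L) (w : W (mbase M)) (g : Env M G w),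
      eval M t w g = eval M u w g) ->
  Conv t u.
Proof. intros H; apply syn_model_complete; intros; apply H. Qed.
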